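(* Let $q=p^m$ with $p>3$ prime and $m\ge1$, let $f(x)=x^{q+2}$ on $\mathbb{F}_{q^2}$, and for $b\in\mathbb{F}_{q^2}$ let $\delta(b)=\#\{u\in\mathbb{F}_{q^2}:\ 2u^{q+1}+u^2=b\}$. Then $\delta(3)=4$ if $q\equiv 5\pmod 6$, and $\delta(3)=2$ otherwise. In particular, if $q\equiv 5\pmod 6$ then the differential uniformity of $f$ is $\delta_f=4$.
   Context: $\delta_f(a,b)=\#\{x\in\mathbb{F}_{q^2}: f(x+a)-f(x)=b\}$, and $\delta_f=\max_{a\in\mathbb{F}_{q^2}^*,b\in\mathbb{F}_{q^2}}\delta_f(a,b)$; note $\delta(b)=\delta_f(1,b+\tfrac14)$. *)

From mathcomp Require Import all_boot all_order all_algebra all_field.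
Set Implicit Arguments. Unset Strict Implicit. Unset Printing Implicit Defensive.
Import GRing.Theory.
Local Open Scope ring_scope.

Definition diff_count (F : finFieldType) (f : F -> F) (a b : F) : nat :=
  #|[set x : F | f (x + a) - f x == b]|.

Definition diff_unif (F : finFieldType) (f : F -> F) : nat :=
  \max_(a : F | a != 0) \max_(b : F) diff_count f a b.

Definition delta_q (F : finFieldType) (q : nat) (b : F) : nat :=
  #|[set u : F | 2 * u ^+ q.+1 + u ^+ 2 == b]|.

From mathcomp Require Import all_boot all_order all_algebra all_field fingroup pgroup.
From mathcomp Require Import ring zify.
Import GRing.Theory.
Local Open Scope ring_scope.

Set Implicit Arguments.
Unset Strict Implicit.
Unset Printing Implicit Defensive.

(* Write N(u) = u^(q+1).  Raising 2 N(u) + u^2 = b to the q-th power gives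
   2 N(u) + (u^q)^2 = b^q, and eliminating u^2 shows that N(u) is a root of
   3 X^2 - 2 (b + b^q) X + b b^q; each of its two roots N leaves u^2 = b - 2N,
   hence delta(b) <= 4.  For b = 3 the two equations give u^q = u or u^q = -u,
   that is u^2 = 1, or u^2 = -3 with u^q = -u.  Writing -3 = s^2 with s = 2w + 1
   for a primitive cube root of unity w (it exists because 3 divides q^2 - 1),
   the second case contributes the two square roots of -3 exactly when
   s^q = 2 w^q + 1 equals -s, i.e. when q = 2 (mod 3).  Finally the substitution
   x = a (u - 1/2) turns f(x + a) - f(x) = b into
   2 u^(q+1) + u^2 = b / a^(q+2) - 1/4, so delta_f is the maximum of delta,
   attained at b = 3. *)

Lemma natf_neq0_lt_pchar (R : nzRingType) (p n : nat) :
  p \in [pchar R] -> (0 < n < p)%N -> n%:R != 0 :> R.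
Proof.
move=> charR /andP[n_gt0 n_lt_p]; rewrite -(dvdn_pcharf charR).
by apply: contraTN n_lt_p => /(dvdn_leq n_gt0); rewrite leqNgt.
Qed.

Lemma odd_modn6_eq5 (n : nat) : odd n -> (n %% 6 == 5)%N = (n %% 3 == 2)%N.
Proof.
move=> n_odd; have : (n %% 2 = 1)%N by rewrite modn2 n_odd.
by case: eqP; case: eqP; lia.
Qed.

Lemma dvd3_sqr_pred (n : nat) : ~~ (3 %| n)%N -> (3 %| (n ^ 2).-1)%N.
Proof.
rewrite /dvdn => n_mod3.
have : (n ^ 2 %% 3 = 1)%N.
  by rewrite -modnXm; have [->|->] : (n %% 3 = 1 \/ n %% 3 = 2)%N by lia.
by lia.
Qed.

Lemma quadratic_roots_cover (K : finFieldType) (a b c : K) : a != 0 ->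
  exists r1 r2, forall x, a * x ^+ 2 + b * x + c = 0 -> x = r1 \/ x = r2.
Proof.
move=> a_neq0.
have [r /eqP root_r | no_root] := pickP (fun x => a * x ^+ 2 + b * x + c == 0).
  exists r, (- (a * r + b) / a) => x root_x.
  have : (x - r) * (a * x + (a * r + b)) = 0.
    transitivity ((a * x ^+ 2 + b * x + c) - (a * r ^+ 2 + b * r + c)); first by ring.
    by rewrite root_x root_r subrr.
  move/eqP; rewrite mulf_eq0 subr_eq0 => /orP[/eqP-> | ]; first by left.
  by rewrite addr_eq0 => /eqP ax; right; rewrite -ax mulrC mulKf.
by exists 0, 0 => x /eqP root_x; move: (no_root x); rewrite root_x.
Qed.

Lemma finField_cube_root_unity (K : finFieldType) :
  (3 %| #|K|.-1)%N -> exists w : K, w ^+ 2 + w + 1 = 0.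
Proof.
rewrite -card_finField_unit => /(Cauchy (isT : prime 3))[x _ ox].
have x3 : FinRing.uval x ^+ 3 = 1 by rewrite -FinRing.val_unitX -ox expg_order.
have x_neq1 : FinRing.uval x != 1.
  apply/eqP => x1; have x_eq1 : x = 1%g by exact: val_inj.
  by move: ox; rewrite x_eq1 order1.
set w := FinRing.uval x in x3 x_neq1 *; exists w; apply/eqP.
have : (w - 1) * (w ^+ 2 + w + 1) == 0.
  have -> : (w - 1) * (w ^+ 2 + w + 1) = w ^+ 3 - 1 by ring.
  by rewrite x3 subrr.
by rewrite mulf_eq0 subr_eq0 (negPf x_neq1).
Qed.

Section FieldOfOrderSquare.

Variables (F : finFieldType) (q : nat).
Hypotheses (q_pchar : [pchar F].-nat q) (cardF : #|F| = (q ^ 2)%N).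

Lemma frobD (x y : F) : (x + y) ^+ q = x ^+ q + y ^+ q.
Proof. exact: exprDn_pchar. Qed.

Lemma frobN (x : F) : (- x) ^+ q = - x ^+ q.
Proof. exact: exprNn_pchar. Qed.

Lemma frob_nat (n : nat) : (n%:R : F) ^+ q = n%:R.
Proof.
elim: n => [|n IHn]; last by rewrite -natr1 frobD IHn expr1n.
by rewrite expr0n; case: q q_pchar.
Qed.

Lemma frobK (x : F) : (x ^+ q) ^+ q = x.
Proof. by rewrite -exprM mulnn -cardF expf_card. Qed.

Lemma prime_ndvd_q (l : nat) : prime l -> l%:R != 0 :> F -> ~~ (l %| q)%N.
Proof.
move=> l_prime; rewrite natf_neq0_pchar; apply: contraL => l_dvd_q.
by rewrite pnatE // inE negbK -(pnatE _ l_prime) (pnat_dvd l_dvd_q q_pchar).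
Qed.

Lemma delta_eq_frob (b u : F) : 2 * u ^+ q.+1 + u ^+ 2 = b ->
  2 * u ^+ q.+1 + (u ^+ q) ^+ 2 = b ^+ q.
Proof.
move=> <-; rewrite frobD exprMn frob_nat !(exprSr u q) exprMn frobK exprAC.
by rewrite [u * _]mulrC.
Qed.

Lemma norm_quadratic (b u : F) : 2 * u ^+ q.+1 + u ^+ 2 = b ->
  3 * (u ^+ q.+1) ^+ 2 - 2 * (b + b ^+ q) * u ^+ q.+1 + b * b ^+ q = 0.
Proof.
move=> eq_b; rewrite -(delta_eq_frob eq_b) -eq_b (exprSr u q).
by set v := u ^+ q; ring.
Qed.

Section OddCharacteristic.

Hypotheses (two_neq0 : (2 : F) != 0) (three_neq0 : (3 : F) != 0).

Lemma four_neq0 : (4 : F) != 0.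
Proof. by rewrite (_ : 4 = 2 * 2) ?mulf_neq0 //; ring. Qed.

Lemma delta_q_le4 (b : F) : (delta_q q b <= 4)%N.
Proof.
have [N1 [N2 normE]] :=
  quadratic_roots_cover (- (2 * (b + b ^+ q))) (b * b ^+ q) three_neq0.
have sqrt_cover (N : F) :
    exists t t', forall u, u ^+ 2 = b - 2 * N -> u = t \/ u = t'.
  have [t [t' cover]] := quadratic_roots_cover 0 (- (b - 2 * N)) (oner_neq0 F).
  by exists t, t' => u u2; apply: cover; rewrite u2; ring.
have [t1 [t1' sqrt1]] := sqrt_cover N1.
have [t2 [t2' sqrt2]] := sqrt_cover N2.
rewrite /delta_q; apply: leq_trans (card_size [:: t1; t1'; t2; t2']).
apply/subset_leq_card/subsetP => u; rewrite !inE => /eqP eq_b.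
have u2 : u ^+ 2 = b - 2 * u ^+ q.+1 by rewrite -eq_b; ring.
have [uN | uN] : u ^+ q.+1 = N1 \/ u ^+ q.+1 = N2.
  by apply: normE; rewrite -(norm_quadratic eq_b); ring.
- by rewrite uN in u2; case: (sqrt1 u u2) => ->; rewrite eqxx ?orbT.
- by rewrite uN in u2; case: (sqrt2 u u2) => ->; rewrite eqxx ?orbT.
Qed.

Lemma diff_count_xq2 (a b : F) : a != 0 ->
  diff_count (fun x : F => x ^+ (q + 2)) a b = delta_q q (b / a ^+ (q + 2) - 1 / 4).
Proof.
move=> a_neq0; rewrite /diff_count /delta_q.
pose psi u := a * (u - 2^-1).
have psi_inj : injective psi by move=> x y /(mulfI a_neq0) /addIr.
rewrite -(card_preimset _ psi_inj); apply: eq_card => u; rewrite !inE.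
have -> : (psi u + a) ^+ (q + 2) - psi u ^+ (q + 2)
         = a ^+ (q + 2) * (2 * u ^+ q.+1 + u ^+ 2 + 1 / 4).
  have -> : psi u + a = a * (u + 2^-1) by rewrite /psi; field.
  rewrite /psi !exprD !exprMn !frobD frobN exprVn frob_nat (exprSr u q).
  by set v := u ^+ q; set A := a ^+ q; field; rewrite four_neq0 two_neq0.
have aq2_neq0 : a ^+ (q + 2) != 0 by rewrite expf_neq0.
by apply/eqP/eqP => [<- | ->]; field; rewrite ?four_neq0 ?aq2_neq0.
Qed.

Lemma eqNf (x : F) : (- x == x) = (x == 0).
Proof.
by rewrite -subr_eq0 -opprD oppr_eq0 -mulr2n -mulr_natl mulf_eq0 (negPf two_neq0).
Qed.

Lemma delta3_eqE (u : F) : (2 * u ^+ q.+1 + u ^+ 2 == 3) =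
  (u ^+ 2 == 1) || (u ^+ q == - u) && (u ^+ 2 == -3).
Proof.
apply/eqP/idP => [eq3 | ].
  have eq3q := delta_eq_frob eq3; rewrite frob_nat in eq3q.
  have : (u ^+ q) ^+ 2 == u ^+ 2 by apply/eqP/(addrI (2 * u ^+ q.+1)); rewrite eq3q.
  rewrite eqf_sqr => /orP[] /eqP uq; rewrite (exprSr u q) uq in eq3.
    by apply/orP; left; apply/eqP/(mulfI three_neq0); rewrite mulr1 -{2}eq3; ring.
  by rewrite uq eqxx /=; apply/orP; right; apply/eqP; rewrite -eq3; ring.
case/orP => [| /andP[/eqP uq /eqP u2]].
  by rewrite sqrf_eq1 => /orP[] /eqP->; rewrite (exprSr _ q) ?frobN expr1n; ring.
by rewrite (exprSr u q) uq mulNr -expr2 u2; ring.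
Qed.

Lemma sqrtN3_frob : exists s : F, s ^+ 2 = -3 /\ (s ^+ q == - s) = (q %% 3 == 2)%N.
Proof.
have q_ndvd3 := prime_ndvd_q (isT : prime 3) three_neq0.
have [w w_eq] : exists w : F, w ^+ 2 + w + 1 = 0.
  by apply: finField_cube_root_unity; rewrite cardF dvd3_sqr_pred.
have w3 : w ^+ 3 = 1.
  apply/subr0_eq; transitivity ((w - 1) * (w ^+ 2 + w + 1)); first by ring.
  by rewrite w_eq mulr0.
have wq : w ^+ q = w ^+ (q %% 3).
  by rewrite {1}(divn_eq q 3) exprD mulnC exprM w3 expr1n mul1r.
have s2 : (2 * w + 1) ^+ 2 = -3.
  transitivity (4 * (w ^+ 2 + w + 1) - 3); first by ring.
  by rewrite w_eq mulr0 sub0r.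
exists (2 * w + 1); split => //; rewrite frobD exprMn frob_nat expr1n wq.
have [->|->] : (q %% 3 = 1 \/ q %% 3 = 2)%N by move: q_ndvd3; rewrite /dvdn; lia.
  by rewrite expr1 eq_sym eqNf -sqrf_eq0 s2 oppr_eq0 (negPf three_neq0).
apply/eqP/subr0_eq; transitivity (2 * (w ^+ 2 + w + 1)); first by ring.
by rewrite w_eq mulr0.
Qed.

Lemma delta_q_3 : delta_q q (3 : F) = (if q %% 3 == 2 then 4 else 2)%N.
Proof.
have [s [s2 sqE]] := sqrtN3_frob.
have one_neqN1 : (1 : F) != -1 by rewrite eq_sym eqNf oner_eq0.
have s_neqN : s != - s by rewrite eq_sym eqNf -sqrf_eq0 s2 oppr_eq0.
have one_neqN3 : (1 : F) != -3.
  by rewrite -subr_eq0 opprK (_ : 1 + 3 = 4) ?four_neq0 //; ring.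
have sol_set : [set u : F | 2 * u ^+ q.+1 + u ^+ 2 == 3] =
    [set 1; -1] :|: [set u | (s ^+ q == - s) && ((u == s) || (u == - s))].
  apply/setP => u; rewrite !inE delta3_eqE sqrf_eq1 -s2 eqf_sqr; congr (_ || _).
  case: (u =P s) => [-> | _]; first by [].
  by case: (u =P - s) => [-> | _]; rewrite ?frobN ?eqr_opp ?andbF.
rewrite /delta_q sol_set sqE; case: (q %% 3 == 2)%N.
- have -> : [set u | true && ((u == s) || (u == - s))] = [set s; - s].
    by apply/setP => u; rewrite !inE.
  have disj : [set 1; -1] :&: [set s; - s] = set0.
    apply/setP => u; rewrite !inE -sqrf_eq1 -eqf_sqr s2.
    by case: (u ^+ 2 =P 1) => // ->; apply/negbTE.
  by rewrite cardsU disj !cards2 one_neqN1 s_neqN cards0.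
- have -> : [set u | false && ((u == s) || (u == - s))] = set0.
    by apply/setP => u; rewrite !inE.
  by rewrite setU0 cards2 one_neqN1.
Qed.

End OddCharacteristic.

End FieldOfOrderSquare.

Theorem proposition5 (F : finFieldType) (p m : nat) :
  prime p -> (3 < p)%N -> (0 < m)%N -> #|F| = ((p ^ m) ^ 2)%N ->
  let q := (p ^ m)%N in
  delta_q q (3 : F) = (if q %% 6 == 5 then 4 else 2)%N /\
  (q %% 6 = 5 -> diff_unif (fun x : F => x ^+ (q + 2)) = 4)%N.
Proof.
move=> p_prime p_gt3 _ cardF q.
have charF : p \in [pchar F].
  by apply: (card_finPcharP (n := (m * 2)%N)); rewrite // cardF expnM.
have q_pchar : [pchar F].-nat q by rewrite pnatX pnatE ?charF.
have two_neq0 : (2 : F) != 0 by apply: natf_neq0_lt_pchar charF _; lia.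
have three_neq0 : (3 : F) != 0 by apply: natf_neq0_lt_pchar charF _; lia.
have q_odd : odd q by rewrite -[odd q]negbK -dvdn2 (prime_ndvd_q q_pchar).
have delta3 := delta_q_3 q_pchar cardF two_neq0 three_neq0.
split; first by rewrite odd_modn6_eq5.
move=> /eqP; rewrite odd_modn6_eq5 // => q_mod3.
apply/eqP; rewrite eqn_leq; apply/andP; split.
  apply/bigmax_leqP => a a_neq0; apply/bigmax_leqP => b _.
  by rewrite diff_count_xq2 ?delta_q_le4.
rewrite /diff_unif; apply: leq_trans _ (@leq_bigmax_cond _ _ _ 1 (oner_neq0 F)).
apply: leq_trans _ (@leq_bigmax _ _ (3 + 1 / 4)).
by rewrite diff_count_xq2 ?oner_neq0 // expr1n divr1 addrK delta3 q_mod3.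
Qed.
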